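(* If $f\in\mathrm{Bool}(X)$ is rigid, then $\mathcal{E}^W(f)=\mathcal{E}^S(f)$.
   Context: A boolean function on a finite set $X$ is a map $f:\mathcal{P}(X)\to\mathbb{Z}$ with $f(\emptyset)=0$; $\mathrm{Bool}(X)$ is their set; $f_{\mid Y}$ is the restriction to $\mathcal{P}(Y)$. For disjoint $X,Y$, $(f\star_1g)(A)=f(A\cap X)+g(A\cap Y)$ (associative, commutative, unit $1\in\mathrm{Bool}(\emptyset)$). For nonempty $X$, $f$ is indecomposable if $f=f'\star_1f''$ with $f'\in\mathrm{Bool}(X\setminus Y)$, $f''\in\mathrm{Bool}(Y)$ forces $Y\in\{\emptyset,X\}$. Each $f$ determines a unique equivalence $\sim_f^i$ with $f=\prod^{\star_1}_{Y\in X/\sim_f^i}f_{\mid Y}$ and each $f_{\mid Y}$ indecomposable; its classes are the indecomposable components of $f$ and $\mathrm{ic}(f)$ is their number. For an equivalence $\sim$: $\mathrm{cl}(\sim)=|X/{\sim}|$, $\varpi_\sim$ the canonical surjection, $f/{\sim}(A)=f(\varpi_\sim^{-1}(A))$, $(f\mid\sim)(A)=\sum_{Y\in X/\sim}f(A\cap Y)$. $\mathcal{E}^W(f)=\{\sim:\mathrm{ic}(f\mid\sim)=\mathrm{cl}(\sim)\}$ and $\mathcal{E}^S(f)=\{\sim\in\mathcal{E}^W(f):\mathrm{ic}(f/{\sim})=\mathrm{ic}(f)\}$. An indecomposable $f$ is rigid if for all disjoint $A,B\subseteq X$ with $f(A\sqcup B)=f(A)+f(B)$, one has $f(A'\sqcup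 B')=f(A')+f(B')$ for all $A'\subseteq A$, $B'\subseteq B$; a general $f$ is rigid if $f_{\mid Y}$ is rigid for each indecomposable component $Y$. *)

From mathcomp Require Import all_boot all_order all_algebra.
Set Implicit Arguments. Unset Strict Implicit. Unset Printing Implicit Defensive.
Import GRing.Theory Num.Theory.
Local Open Scope ring_scope.

(* A boolean
   function on X is f : {set T} -> int with f set0 = 0; only its values on
   subsets of X matter.  An equivalence relation on X is represented by its
   set of classes P : {set {set T}} with [partition P X]. *)

Section BoolFun.
Variable T : finType.

(* f = f' *_1 f'' with f' in Bool(Y \ Z), f'' in Bool(Z), on the set Y.
   Necessarily f' = f_{|Y\Z} and f'' = f_{|Z}. *)
Definition splits (Y Z : {set T}) (f : {set T} -> int) : bool :=
  [forall A : {set T}, (A \subset Y) ==>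
     (f A == f (A :&: (Y :\: Z)) + f (A :&: Z))].

Definition indecomposable (Y : {set T}) (f : {set T} -> int) : bool :=
  (Y != set0) &&
  [forall Z : {set T}, ((Z \subset Y) && splits Y Z f) ==>
     ((Z == set0) || (Z == Y))].

Definition decomposes_along (X : {set T}) (P : {set {set T}})
    (f : {set T} -> int) : bool :=
  [forall A : {set T}, (A \subset X) ==>
     (f A == \sum_(Y in P) f (A :&: Y))].

Definition ic_partition_spec (X : {set T}) (f : {set T} -> int)
    (P : {set {set T}}) : bool :=
  [&& partition P X, decomposes_along X P f &
      [forall Y in P, indecomposable Y f]].

(* the (unique) partition X / ~^i_f into indecomposable components *)
Definition ic_part (X : {set T}) (f : {set T} -> int) : {set {set T}} :=
  odflt set0 [pick P | ic_partition_spec X f P].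

Definition ic (X : {set T}) (f : {set T} -> int) : nat := #|ic_part X f|.

Definition fres (P : {set {set T}}) (f : {set T} -> int) : {set T} -> int :=
  fun A => \sum_(Y in P) f (A :&: Y).

Definition fquot (f : {set T} -> int) : {set {set T}} -> int :=
  fun B => f (cover B).

End BoolFun.

Section Equiv.
Variable T : finType.

Definition E_W (X : {set T}) (f : {set T} -> int) (P : {set {set T}}) : Prop :=
  partition P X /\ ic X (fres P f) = #|P|.

Definition E_S (X : {set T}) (f : {set T} -> int) (P : {set {set T}}) : Prop :=
  E_W X f P /\ ic P (fquot f) = ic X f.

Definition rigid_indec (Y : {set T}) (f : {set T} -> int) : Prop :=
  forall A B : {set T}, A \subset Y -> B \subset Y -> [disjoint A & B] ->
    f (A :|: B) = f A + f B ->
    forall A' B' : {set T}, A' \subset A -> B' \subset B ->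
      f (A' :|: B') = f A' + f B'.

Definition rigid (X : {set T}) (f : {set T} -> int) : Prop :=
  forall Y, Y \in ic_part X f -> rigid_indec Y f.

End Equiv.

From mathcomp Require Import all_boot all_order all_algebra.
Set Implicit Arguments. Unset Strict Implicit. Unset Printing Implicit Defensive.
Import GRing.Theory Num.Theory.

(* If P is in E^W, the components of f|~ each lie inside a block of P (an
   indecomposable set lies inside a block of every decomposition), and there
   are #|P| of them, so they are the blocks of P: every block of P is
   f-indecomposable.  Hence P refines the component partition C of f, and
   grouping the blocks of P by the component K of C containing them gives a
   partition R of X/~ along which f/~ decomposes, with #|R| = #|C|.  Each
   group is f/~-indecomposable: a splitting of it yields K = U1 + U2 with
   f K = f U1 + f U2, rigidity extends this additivity to all pairs of subsets
   of U1 and U2, so f splits on K along U2, forcing U2 to be empty or K.  So R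
   is the component partition of f/~ and ic(f/~) = ic(f).
   Existence of components: a decomposition with the most blocks has
   indecomposable blocks. *)

Section Refinement.
Variable T : finType.
Implicit Types (X Y K A : {set T}) (P Q R C : {set {set T}}).

Definition refines P C : Prop :=
  forall Y, Y \in P -> exists2 K, K \in C & Y \subset K.

Lemma refines_block P C Y K x : trivIset C -> refines P C ->
  Y \in P -> K \in C -> x \in Y -> x \in K -> Y \subset K.
Proof.
move=> tC refPC YP KC xY xK; have [K' K'C sYK'] := refPC Y YP.
by rewrite -(def_pblock tC KC xK) (def_pblock tC K'C (subsetP sYK' x xY)).
Qed.

Lemma refines_sub X P Q :
  partition P X -> partition Q X -> refines P Q -> refines Q P -> P \subset Q.
Proof.
move=> pP pQ refPQ refQP; apply/subsetP => Y YP.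
have [K KQ sYK] := refPQ Y YP; have [Y' Y'P sKY'] := refQP K KQ.
have /set0Pn[x xY] := partition_neq0 pP YP.
have xY' := subsetP sKY' x (subsetP sYK x xY).
have tP := partition_trivIset pP.
rewrite -(def_pblock tP Y'P xY') (def_pblock tP YP xY) in sKY'.
suff -> : Y = K by [].
by apply/eqP; rewrite eqEsubset sYK sKY'.
Qed.

Lemma partition_card_eq_singletons (U : finType) (R : {set {set U}})
    (D B : {set U}) :
  partition R D -> #|R| = #|D| -> B \in R -> #|B| = 1.
Proof.
move=> pR cardR BR.
have ge1 (B' : {set U}) : B' \in R -> 1 <= #|B'| ?= iff (1 == #|B'|).
  by move=> B'R; split; [rewrite card_gt0 (partition_neq0 pR B'R)|].
have /leqif_sum := ge1; rewrite sum1_card -(card_partition pR) cardR => -[_].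
by rewrite eqxx => /esym/forall_inP/(_ B BR)/eqP.
Qed.

Lemma notin_partition Q X A :
  partition Q X -> A != set0 -> [disjoint A & X] -> A \notin Q.
Proof.
move=> pQ An0; apply: contraL => AQ.
by rewrite -setI_eq0 (setIidPl (partitionS pQ AQ)).
Qed.

Lemma disjoint_cover P Q R : trivIset P -> Q \subset P -> R \subset P ->
  [disjoint Q & R] -> [disjoint cover Q & cover R].
Proof.
move=> tP sQP sRP dQR; rewrite -setI_eq0; apply/eqP/setP => x; rewrite !inE.
apply/negP => /andP[/bigcupP[Y1 Y1Q xY1] /bigcupP[Y2 Y2R xY2]].
have Y1P := subsetP sQP Y1 Y1Q; have Y2P := subsetP sRP Y2 Y2R.
move: (disjointFr dQR Y1Q).
by rewrite -(def_pblock tP Y1P xY1) (def_pblock tP Y2P xY2) Y2R.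
Qed.

Lemma partition_cover_subset X P Q R : partition P X -> Q \subset P ->
  R \subset P -> cover Q \subset cover R -> Q \subset R.
Proof.
move=> pP sQP sRP sQR; apply/subsetP => Y YQ; have YP := subsetP sQP Y YQ.
have /set0Pn[x xY] := partition_neq0 pP YP.
have /bigcupP[Y' Y'R xY'] : x \in cover R.
  by apply: (subsetP sQR); apply/bigcupP; exists Y.
have tP := partition_trivIset pP.
by rewrite -(def_pblock tP YP xY) (def_pblock tP (subsetP sRP Y' Y'R) xY').
Qed.

Definition split_block P Y Z := Z |: ((Y :\: Z) |: (P :\ Y)).

Section SplitBlock.
Variables (X Y Z : {set T}) (P : {set {set T}}).
Hypotheses (pP : partition P X) (YP : Y \in P) (sZY : Z \subset Y).
Hypotheses (Zn0 : Z != set0) (ZnY : Z != Y).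

Let YZn0 : Y :\: Z != set0.
Proof. by rewrite setD_eq0; apply: contra ZnY => sYZ; rewrite eqEsubset sZY. Qed.

Let disjoint_diff : [disjoint Y :\: Z & X :\: Y].
Proof. by rewrite disjoints_subset setCD (subset_trans (subsetDl _ _)) ?subsetUr. Qed.

Let disjoint_part : [disjoint Z & (Y :\: Z) :|: (X :\: Y)].
Proof.
rewrite -setI_eq0; apply/eqP/setP => x; rewrite !inE.
by have := subsetP sZY x; case: (x \in Z) => // ->.
Qed.

Let pPY := partitionD1 pP YP.
Let pPYZ := partitionU1 pPY YZn0 disjoint_diff.

Lemma split_block_notin :
  Y :\: Z \notin P :\ Y /\ Z \notin (Y :\: Z) |: (P :\ Y).
Proof. by rewrite (notin_partition pPY) // (notin_partition pPYZ). Qed.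

Lemma partition_split_block : partition (split_block P Y Z) X.
Proof.
suff EX : Z :|: ((Y :\: Z) :|: (X :\: Y)) = X by rewrite -EX; apply: partitionU1.
apply/setP => x; rewrite !inE.
move: (subsetP sZY x) (subsetP (partitionS pP YP) x) => /implyP + /implyP.
by case: (x \in Z); case: (x \in Y); case: (x \in X).
Qed.

Lemma card_split_block : #|split_block P Y Z| = #|P|.+1.
Proof.
have [nYZ nZ] := split_block_notin.
by rewrite /split_block !cardsU1 nYZ nZ (cardsD1 Y P) YP.
Qed.

End SplitBlock.

Section Coarsening.
Variables (X : {set T}) (P C : {set {set T}}).
Hypotheses (pP : partition P X) (pC : partition C X) (refPC : refines P C).

Lemma cover_refines K : K \in C -> cover (P ::&: K) = K.
Proof.
move=> KC; apply/eqP; rewrite eqEsubset (subset_trans (cover_setI _ _)) ?subsetIr //.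
apply/subsetP => x xK.
have xP : x \in cover P by rewrite (cover_partition pP) (subsetP (partitionS pC KC)).
apply/bigcupP; exists (pblock P x); last by rewrite mem_pblock.
rewrite inE pblock_mem //=.
apply: (refines_block (partition_trivIset pC) refPC) xK;
  by rewrite ?pblock_mem ?mem_pblock.
Qed.

Lemma coverI_refines Q K : Q \subset P -> K \in C ->
  cover Q :&: K = cover (Q ::&: K).
Proof.
move=> sQP KC; apply/eqP; rewrite eqEsubset cover_setI andbT.
apply/subsetP => x /setIP[/bigcupP[Y YQ xY] xK]; apply/bigcupP; exists Y => //.
rewrite inE YQ.
exact: (refines_block (partition_trivIset pC) refPC (subsetP sQP Y YQ) KC xY).
Qed.

Lemma partition_refines :
  partition [set P ::&: K | K in C] P /\ {in C &, injective (fun K => P ::&: K)}.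
Proof.
have [||pR injR] := @indexed_partition _ _ (mem C) (fun K => P ::&: K).
- move=> K1 K2 K1C K2C; apply: contraR => /pred0Pn[Y /andP[]].
  rewrite !inE => /andP[YP sYK1] /andP[_ sYK2].
  have /set0Pn[x xY] := partition_neq0 pP YP.
  by rewrite -(def_pblock (partition_trivIset pC) K1C (subsetP sYK1 x xY))
             -(def_pblock (partition_trivIset pC) K2C (subsetP sYK2 x xY)).
- move=> K KC; apply: contraTneq (partition_neq0 pC KC) => P0.
  by rewrite negbK -(cover_refines KC) P0 /cover big_set0.
suff coverR : cover [set P ::&: K | K in C] = P by move: pR; rewrite coverR.
apply/eqP; rewrite eqEsubset; apply/andP; split.
  by apply/bigcupsP => _ /imsetP[K _ ->]; apply/subsetP => Y /setIdP[].
apply/subsetP => Y YP; have /set0Pn[x xY] := partition_neq0 pP YP.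
have xC : x \in cover C.
  by rewrite (cover_partition pC) (subsetP (partitionS pP YP)).
apply/bigcupP; exists (P ::&: pblock C x); first by rewrite imset_f ?pblock_mem.
rewrite inE YP; apply: (refines_block (partition_trivIset pC) refPC) xY _;
  by rewrite ?pblock_mem ?mem_pblock.
Qed.

Lemma refines_card_eq : #|P| = #|C| -> P = C.
Proof.
have [pR injR] := partition_refines.
move=> cardPC; apply/esym/eqP; rewrite eqEcard cardPC leqnn andbT.
apply/subsetP => K KC.
have /cards1P[Y EY] : #|P ::&: K| == 1.
  apply/eqP/(partition_card_eq_singletons pR); last exact: imset_f.
  by rewrite card_in_imset.
have : Y \in P ::&: K by rewrite EY set11.
by rewrite -(cover_refines KC) EY cover1 => /setIdP[].
Qed.

End Coarsening.
End Refinement.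

Section Decomposition.
Variables (T : finType) (g : {set T} -> int).
Hypothesis g0 : g set0 = 0%R.
Implicit Types (X Y Z W A : {set T}) (P Q : {set {set T}}).

Lemma decomposes_alongP X Q A : decomposes_along X Q g -> A \subset X ->
  g A = (\sum_(W in Q) g (A :&: W))%R.
Proof. by move=> /forallP/(_ A)/implyP => dQ /dQ/eqP. Qed.

Lemma decomposes_splits X Q Z W : partition Q X -> decomposes_along X Q g ->
  Z \subset X -> W \in Q -> splits Z (Z :&: W) g.
Proof.
move=> pQ dQ sZX WQ; apply/forallP => A; apply/implyP => sAZ.
have sAX := subset_trans sAZ sZX.
rewrite !(decomposes_alongP dQ) ?(subset_trans (subsetIl _ _)) // -big_split.
apply/eqP/eq_bigr => W' W'Q /=.
have [<- | neW] := eqVneq W W'.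
  have -> : A :&: (Z :\: Z :&: W) :&: W = set0.
    apply/setP => x; rewrite !inE.
    by case: (x \in W); case: (x \in Z); rewrite ?andbF.
  have -> : A :&: (Z :&: W) :&: W = A :&: W.
    apply/setP => x; rewrite !inE; case xA: (x \in A) => //=.
    by rewrite (subsetP sAZ x xA) andbb.
  by rewrite g0 add0r.
have dW := trivIsetP (partition_trivIset pQ) _ _ WQ W'Q neW.
have -> : A :&: (Z :&: W) :&: W' = set0.
  apply/setP => x; rewrite !inE; case xW': (x \in W'); rewrite ?andbF //.
  by rewrite (disjointFl dW xW') !andbF.
rewrite g0 addr0; congr g; apply/setP => x; rewrite !inE.
case xW': (x \in W'); rewrite ?andbF // (disjointFl dW xW') /= andbT.
by case xA: (x \in A); rewrite //= (subsetP sAZ x xA).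
Qed.

Lemma indecomposable_blocks_refine X P Q :
  partition P X -> {in P, forall Y, indecomposable Y g} ->
  partition Q X -> decomposes_along X Q g -> refines P Q.
Proof.
move=> pP indP pQ dQ Y YP; have /andP[Yn0 /forallP splitY] := indP Y YP.
have sYX := partitionS pP YP; have /set0Pn[x xY] := Yn0.
have xQ : x \in cover Q by rewrite (cover_partition pQ) (subsetP sYX).
exists (pblock Q x); first exact: pblock_mem.
have := splitY (Y :&: pblock Q x).
rewrite subsetIl (decomposes_splits pQ dQ sYX (pblock_mem xQ)) /=.
case/orP=> /eqP; last by move/setIidPl.
by move/setP/(_ x); rewrite !inE xY mem_pblock xQ.
Qed.

Lemma ic_partition_spec_unique X P Q :
  ic_partition_spec X g P -> ic_partition_spec X g Q -> P = Q.
Proof.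
move=> /and3P[pP dP /forall_inP iP] /and3P[pQ dQ /forall_inP iQ].
have refPQ := indecomposable_blocks_refine pP iP pQ dQ.
have refQP := indecomposable_blocks_refine pQ iQ pP dP.
by apply/eqP; rewrite eqEsubset !(refines_sub pP pQ, refines_sub pQ pP).
Qed.

Lemma decomposes_split_block X P Y Z :
  partition P X -> decomposes_along X P g -> Y \in P -> Z \subset Y ->
  Z != set0 -> Z != Y -> splits Y Z g -> decomposes_along X (split_block P Y Z) g.
Proof.
move=> pP dP YP sZY Zn0 ZnY splitYZ; apply/forallP => A; apply/implyP => sAX.
have [nYZ nZ] := split_block_notin pP YP sZY Zn0 ZnY.
rewrite (decomposes_alongP dP sAX) (big_setD1 _ YP) /split_block.
rewrite (big_setU1 _ nZ) (big_setU1 _ nYZ) /= addrA.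
move/forallP/(_ (A :&: Y))/implyP: splitYZ => /(_ (subsetIr _ _))/eqP ->.
rewrite -setIA setIDA setIid -setIA (setIidPr sZY).
by rewrite [(g (A :&: Z) + _)%R]addrC.
Qed.

Lemma ic_partition_spec_exists X : exists P, ic_partition_spec X g P.
Proof.
pose dec P := partition P X && decomposes_along X P g.
have [P0 decP0] : exists P0, dec P0.
  have [X0 | Xn0] := eqVneq X set0.
    exists set0; rewrite /dec X0 partition_set0 eqxx; apply/forallP => A.
    by apply/implyP; rewrite subset0 => /eqP ->; rewrite big_set0 g0.
  exists [set X]; apply/andP; split.
    by apply/and3P; rewrite cover1 trivIset1 in_set1 eq_sym.
  by apply/forallP => A; apply/implyP => sAX; rewrite big_set1 (setIidPl sAX).
have [P /andP[pP dP] maxP] := @arg_maxnP _ P0 dec (fun P => #|P|) decP0.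
exists P; apply/and3P; split=> //; apply/forall_inP => Y YP.
rewrite /indecomposable (partition_neq0 pP YP); apply/forallP => Z.
apply/implyP => /andP[sZY splitYZ]; apply/negPn/negP; rewrite negb_or.
case/andP=> Zn0 ZnY.
have := maxP (split_block P Y Z).
rewrite /dec partition_split_block // decomposes_split_block //.
by rewrite (card_split_block pP) // => /(_ isT) /=; rewrite ltnn.
Qed.

Lemma ic_partP X : ic_partition_spec X g (ic_part X g).
Proof.
rewrite /ic_part; case: pickP => [P -> //| none].
by have [P] := ic_partition_spec_exists X; rewrite none.
Qed.

Lemma indecomposable_ext Y (h : {set T} -> int) :
  (forall A, A \subset Y -> g A = h A) -> indecomposable Y g = indecomposable Y h.
Proof.
move=> eq_gh; rewrite /indecomposable /splits; congr andb.
apply: eq_forallb => Z; congr (_ ==> _); congr andb.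
apply: eq_forallb => A; case sAY: (A \subset Y) => //=.
by rewrite !eq_gh // (subset_trans (subsetIl _ _)).
Qed.

End Decomposition.

Section RestrictionQuotient.
Variables (T : finType) (f : {set T} -> int).
Hypothesis f0 : f set0 = 0%R.
Implicit Types (X Y K A U : {set T}) (P C : {set {set T}}).

Lemma fres_block P Y A : trivIset P -> Y \in P -> A \subset Y -> fres P f A = f A.
Proof.
move=> tP YP sAY; rewrite /fres (bigD1 Y YP) /= (setIidPl sAY) big1 ?addr0 //.
move=> Y' /andP[Y'P neY]; rewrite -f0; congr f; apply/setP => x; rewrite !inE.
case xA: (x \in A) => //=.
by rewrite (disjointFl (trivIsetP tP _ _ Y'P YP neY) (subsetP sAY x xA)).
Qed.

Lemma fres0 P : fres P f set0 = 0%R.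
Proof. by rewrite /fres big1 // => Y _; rewrite set0I f0. Qed.

Lemma fres_decomposes X P : partition P X -> decomposes_along X P (fres P f).
Proof.
move=> pP; apply/forall_inP => A _; apply/eqP/eq_bigr => Y YP.
by rewrite (fres_block (partition_trivIset pP) YP (subsetIr _ _)).
Qed.

Lemma fquot0 : fquot f set0 = 0%R.
Proof. by rewrite /fquot /cover big_set0 f0. Qed.

Lemma ic_fres_indecomposable X P : partition P X -> ic X (fres P f) = #|P| ->
  {in P, forall Y, indecomposable Y f}.
Proof.
move=> pP icP Y YP.
have /and3P[pQ dQ /forall_inP iQ] := ic_partP (fres0 P) X.
have refQP :=
  indecomposable_blocks_refine (fres0 P) pQ iQ pP (fres_decomposes pP).
rewrite (refines_card_eq pQ pP refQP icP) in iQ.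
rewrite -(@indecomposable_ext _ (fres P f)) ?iQ // => A.
exact: fres_block (partition_trivIset pP) YP.
Qed.

Lemma rigid_splits K U1 U2 : rigid_indec K f ->
  U1 \subset K -> U2 \subset K -> [disjoint U1 & U2] -> U1 :|: U2 = K ->
  f K = (f U1 + f U2)%R -> splits K U2 f.
Proof.
move=> rigK sU1 sU2 dU EK fK; apply/forall_inP => A sAK; apply/eqP.
have EU1 : K :\: U2 = U1.
  by rewrite -EK setDUl setDv setU0; apply/setDidPl.
have EA : A = (A :&: U1) :|: (A :&: U2) by rewrite -setIUr EK (setIidPl sAK).
rewrite EU1 {1}EA (rigK U1 U2) ?subsetIr //.
by rewrite EK.
Qed.

Section Quotient.
Variables (X : {set T}) (P C : {set {set T}}).
Hypotheses (pP : partition P X) (pC : partition C X) (refPC : refines P C).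

Lemma fquot_decomposes : decomposes_along X C f ->
  decomposes_along P [set P ::&: K | K in C] (fquot f).
Proof.
have [_ injR] := partition_refines pP pC refPC.
move=> dC; apply/forall_inP => Q sQP; rewrite /fquot big_imset //=.
have sQX : cover Q \subset X.
  rewrite -(cover_partition pP); apply/subsetP => x /bigcupP[Y YQ xY].
  by apply/bigcupP; exists Y => //; apply: (subsetP sQP).
rewrite (decomposes_alongP dC sQX); apply/eqP/eq_bigr => K KC.
rewrite -setI_powerset setIA (setIidPl sQP) setI_powerset.
by rewrite (coverI_refines pC refPC sQP KC).
Qed.

Lemma fquot_block_indecomposable K : K \in C ->
  indecomposable K f -> rigid_indec K f -> indecomposable (P ::&: K) (fquot f).
Proof.
move=> KC /andP[_ /forallP indK] rigK.
have [pR _] := partition_refines pP pC refPC.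
rewrite /indecomposable (partition_neq0 pR (imset_f _ KC)).
apply/forallP => Z; apply/implyP.
case/andP=> sZK /forall_inP/(_ _ (subxx _))/eqP splitZ.
have sKP : P ::&: K \subset P by rewrite -setI_powerset subsetIl.
have sZP := subset_trans sZK sKP; have sDP := subset_trans (subsetDl _ Z) sKP.
have EK : cover (P ::&: K :\: Z) :|: cover Z = K.
  rewrite -[RHS](cover_refines pP pC refPC KC) -bigcup_setU setDE setUIl.
  by rewrite [~: Z :|: Z]setUC setUCr setIT (setUidPl sZK).
have fK : f K = (f (cover (P ::&: K :\: Z)) + f (cover Z))%R.
  move: splitZ; rewrite /fquot (setIidPr (subsetDl _ _)) (setIidPr sZK).
  by rewrite (cover_refines pP pC refPC KC).
have dDZ : [disjoint P ::&: K :\: Z & Z] by rewrite disjoints_subset setDE subsetIr.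
have dU := disjoint_cover (partition_trivIset pP) sDP sZP dDZ.
have sZK' : cover Z \subset K by rewrite -EK subsetUr.
have sDK' : cover (P ::&: K :\: Z) \subset K by rewrite -{2}EK subsetUl.
move: (indK (cover Z)); rewrite sZK' (rigid_splits rigK sDK' sZK' dU EK fK) /=.
case/orP=> [/eqP Z0 | /eqP ZK]; apply/orP; [left | right].
  rewrite -subset0 (partition_cover_subset pP sZP (sub0set _)) //.
  by rewrite Z0 sub0set.
rewrite eqEsubset sZK (partition_cover_subset pP sKP sZP) //.
by rewrite ZK (cover_refines pP pC refPC KC).
Qed.

End Quotient.

End RestrictionQuotient.

Theorem lemma4p13 (T : finType) (X : {set T}) (f : {set T} -> int) :
  f set0 = 0%R -> rigid X f ->
  forall P : {set {set T}}, E_W X f P <-> E_S X f P.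
Proof.
move=> f0 rigf P; split=> [[pP icP] | [] //]; split=> //.
have indP := ic_fres_indecomposable f0 pP icP.
have /and3P[pC dC /forall_inP indC] := ic_partP f0 X.
have refPC := indecomposable_blocks_refine f0 pP indP pC dC.
have [pR injR] := partition_refines pP pC refPC.
have specR : ic_partition_spec P (fquot f) [set P ::&: K | K in ic_part X f].
  apply/and3P; split=> //; first exact: fquot_decomposes pP pC refPC dC.
  apply/forall_inP => _ /imsetP[K KC ->].
  exact: (fquot_block_indecomposable (f:=f) pP pC refPC KC (indC K KC) (rigf K KC)).
have icR := ic_partition_spec_unique (fquot0 f0) (ic_partP (fquot0 f0) P) specR.
by rewrite /ic icR card_in_imset.
Qed.
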